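(* Let $F$ be a field and $n\ge 2$ an integer. Then the matrix ring $\mathbb{M}_n(F)$ does not have the $2$-nil-sum property.
   Context: All rings are associative with identity. A central unit of $R$ is a unit of $R$ lying in the center of $R$; a non central-unit is an element that is not a central unit. A ring $R$ has the $2$-nil-sum property if every non central-unit of $R$ is a sum of two nilpotent elements of $R$. *)

From mathcomp Require Import all_boot all_order all_algebra.
Set Implicit Arguments. Unset Strict Implicit. Unset Printing Implicit Defensive.
Import GRing.Theory.
Local Open Scope ring_scope.

Definition nilpotent_elt (R : pzRingType) (x : R) : Prop := exists k : nat, x ^+ k = 0.

Definition central_unit (R : unitRingType) (x : R) : Prop :=
  x \is a GRing.unit /\ forall y : R, x * y = y * x.

Definition two_nil_sum {R : unitRingType} : Prop :=
  forall x : R, ~ central_unit x ->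
    exists a b : R, nilpotent_elt a /\ nilpotent_elt b /\ x = a + b.

From mathcomp Require Import all_boot all_order all_algebra.
Set Implicit Arguments. Unset Strict Implicit. Unset Printing Implicit Defensive.
Import GRing.Theory.
Local Open Scope ring_scope.

(* Proof idea: the trace is an obstruction to being a sum of two nilpotents.
   Over an integral domain, a nilpotent n x n matrix A has characteristic
   polynomial 'X^n: taking determinants in the factorisation
   X^k I - A^k = (X I - A) * (...) shows that char_poly A divides X^(k n),
   hence is monic associate to a power of X, of degree n.  Its coefficient
   of X^(n-1), which is - tr A, therefore vanishes.  So a sum of two
   nilpotent matrices has trace 0 by linearity of the trace.
   For n >= 2 the matrix unit E_00 has trace 1, and it is not central since
   E_00 E_0(n-1) = E_0(n-1) while E_0(n-1) E_00 = 0; so E_00 is a non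
   central-unit that is not a sum of two nilpotents. *)

Section NilpotentTrace.

Variable R : idomainType.

Lemma char_poly_nilpotent_dvd (n k : nat) (A : 'M[R]_n) :
  A ^+ k = 0 -> char_poly A %| 'X ^+ (k * n).
Proof.
move=> Ak.
pose XI : 'M[{poly R}]_n := 'X%:M.
have commXA : GRing.comm XI (map_mx polyC A).
  by rewrite /GRing.comm -!mulmxE [RHS]scalar_mxC.
have XIk : XI ^+ k = ('X ^+ k)%:M by rewrite rmorphXn.
have Apk : map_mx polyC A ^+ k = 0 by rewrite -rmorphXn Ak raddf0.
have := congr1 determinant (subrXX_comm k commXA).
rewrite Apk subr0 XIk det_scalar -mulmxE det_mulmx -exprM => ->.
exact: dvdp_mulIl.
Qed.

Lemma char_poly_nilpotent (n k : nat) (A : 'M[R]_n) :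
  A ^+ k = 0 -> char_poly A = 'X ^+ n.
Proof.
move=> /char_poly_nilpotent_dvd dvd_charX.
have : char_poly A %| ('X - 0%:P) ^+ (k * n) by rewrite polyC0 subr0.
move=> /dvdp_exp_XsubCP [j _].
rewrite polyC0 subr0 eqp_monic ?char_poly_monic ?monicXn // => /eqP char_Xj.
have := size_char_poly A.
by rewrite char_Xj size_polyXn => -[->].
Qed.

Lemma mxtrace_nilpotent (n : nat) (A : 'M[R]_n) :
  nilpotent_elt A -> \tr A = 0.
Proof.
case: n A => [A _ | m A [k /char_poly_nilpotent charX]].
  by rewrite /mxtrace big_ord0.
apply/eqP; rewrite -oppr_eq0 -char_poly_trace // charX coefXn.
by rewrite ltn_eqF.
Qed.

Lemma mxtrace_nil_sum (n : nat) (A B : 'M[R]_n) :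
  nilpotent_elt A -> nilpotent_elt B -> \tr (A + B) = 0.
Proof.
by move=> nilA nilB; rewrite mxtraceD !mxtrace_nilpotent ?addr0.
Qed.

End NilpotentTrace.

Section MatrixUnit.

Variables (R : nzRingType) (m : nat).

Lemma mxtrace_delta00 : \tr (delta_mx ord0 ord0 : 'M[R]_m.+2) = 1.
Proof.
rewrite /mxtrace (bigD1 ord0) //= big1 ?addr0 ?mxE ?eqxx //.
by move=> i /negPf i_neq0; rewrite mxE i_neq0.
Qed.

Lemma delta00_not_central :
  (delta_mx ord0 ord0 : 'M[R]_m.+2) * delta_mx ord0 ord_max
    != delta_mx ord0 ord_max * delta_mx ord0 ord0.
Proof.
rewrite -!mulmxE mul_delta_mx mul_delta_mx_0 //.
apply/eqP => /matrixP /(_ ord0 ord_max).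
by rewrite !mxE !eqxx => /eqP; rewrite oner_eq0.
Qed.

End MatrixUnit.

Theorem mainTheorem6 (F : fieldType) (n : nat) (hn : (2 <= n)%N) :
  ~ two_nil_sum (R := 'M[F]_n.-1.+1).
Proof.
case: n hn => [|[|m]] // _ nil_sum.
pose E : 'M[F]_m.+2 := delta_mx ord0 ord0.
have E_not_central_unit : ~ central_unit E.
  by case=> _ /(_ (delta_mx ord0 ord_max)) /eqP; rewrite (negPf (delta00_not_central _ _)).
have [a [b [nil_a [nil_b E_ab]]]] := nil_sum E E_not_central_unit.
have := mxtrace_nil_sum nil_a nil_b.
by rewrite -E_ab mxtrace_delta00 => /eqP; rewrite oner_eq0.
Qed.
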